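(* Let $A\in\mathbb{R}^{n\times n}$, $B\in\mathbb{R}^{n\times m}$, $C\in\mathbb{R}^{p\times n}$ with $(A,C)$ observable, $\ell$ its observability index, and $\mathbf{F}_\ell,\mathbf{L}_\ell,\mathbf{B}_\ell,\mathbf{A}_\ell$ as in the context. For each $\hat x$, $\hat\chi$ and each sequence $\{u(k)\}_{k=0}^\infty$ there exists $\hat\xi$ such that the solution $(x(\cdot),\chi(\cdot))$ of $x^+=Ax+Bu$, $y=Cx$, $\chi^+=\mathbf{F}_\ell\chi+\mathbf{L}_\ell y+\mathbf{B}_\ell u$ with $(x(0),\chi(0))=(\hat x,\hat\chi)$, its output $y(\cdot)=Cx(\cdot)$, and the solution $\xi(\cdot)$ of $\xi^+=\mathbf{A}_\ell\xi+\mathbf{B}_\ell v$ with $\xi(\ell)=\hat\xi$ and $v(k)=u(k)$ for $k\ge\ell$ satisfy $\xi(k)=(y(k-\ell),\dots,y(k-1),u(k-\ell),\dots,u(k-1))=\chi(k)$ for all $k\ge\ell$.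
   Context: $(v_1,\dots,v_r)$ denotes a stacked column vector. The observability index $\ell$ is the smallest $l$ with $\operatorname{rank}[C;CA;\dots;CA^{l-1}]=n$. $\mathcal{O}_\ell=[C;CA;\dots;CA^{\ell-1}]$; $\mathcal{T}_\ell\in\mathbb{R}^{p\ell\times m\ell}$ block lower triangular with $(i,j)$ block $CA^{i-j-1}B$ if $i>j$ and $0$ otherwise; $\mathcal{R}_\ell=[A^{\ell-1}B\ \cdots\ AB\ B]$; $\mathcal{O}_\ell^{L}$ a fixed left inverse of $\mathcal{O}_\ell$. $\mathbf{F}_\ell=\mathrm{blockdiag}(S_p,S_m)$, $S_q\in\mathbb{R}^{q\ell\times q\ell}$ with blocks $I_q$ at block positions $(i,i+1)$, $i=1,\dots,\ell-1$, zeros elsewhere; $\mathbf{L}_\ell\in\mathbb{R}^{(p\ell+m\ell)\times p}$ with $I_p$ in rows $p\ell-p+1,\dots,p\ell$, zeros elsewhere; $\mathbf{B}_\ell\in\mathbb{R}^{(p\ell+m\ell)\times m}$ with $I_m$ in its last $m$ rows, zeros elsewhere. $Z_\ell=[CA^\ell\mathcal{O}_\ell^L\ \ C\mathcal{R}_\ell-CA^\ell\mathcal{O}_\ell^L\mathcal{T}_\ell]$, $\mathbf{A}_\ell=\mathbf{F}_\ell+\mathbf{L}_\ell Z_\ell$. *)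

(* Block matrices indexed block-major: a flat index k of a
   matrix with l blocks of height q refers to block k %/ q (0-based), row k %% q. *)
From HB Require Import structures.
From mathcomp Require Import all_boot all_order all_algebra.
Set Implicit Arguments. Unset Strict Implicit. Unset Printing Implicit Defensive.
Import Order.TTheory GRing.Theory Num.Theory.
Local Open Scope ring_scope.

Section Defs.
Variable R : realFieldType.

(* entry (i,j) of M, with natural-number indices; 0 if out of range *)
Definition mxent (a b : nat) (M : 'M[R]_(a, b)) (i j : nat) : R :=
  match (insub i : option 'I_a), (insub j : option 'I_b) with
  | Some i', Some j' => M i' j'
  | _, _ => 0
  end.

Definition blockmx (a b l1 l2 : nat) (F : nat -> nat -> 'M[R]_(a, b))
  : 'M[R]_(l1 * a, l2 * b) :=
  \matrix_(k < l1 * a, k' < l2 * b) mxent (F (k %/ a)%N (k' %/ b)%N) (k %% a)%N (k' %% b)%N.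

Definition blockcol (a b l : nat) (F : nat -> 'M[R]_(a, b)) : 'M[R]_(l * a, b) :=
  \matrix_(k < l * a, j < b) mxent (F (k %/ a)%N) (k %% a)%N j.

Definition blockrow (a b l : nat) (F : nat -> 'M[R]_(a, b)) : 'M[R]_(a, l * b) :=
  \matrix_(i < a, k' < l * b) mxent (F (k' %/ b)%N) i (k' %% b)%N.

Variables (n m p : nat).

Definition obsmx (A : 'M[R]_n) (C : 'M[R]_(p, n)) (l : nat) : 'M[R]_(l * p, n) :=
  blockcol l (fun i => C *m A ^+ i).

Definition is_obs_index (A : 'M[R]_n) (C : 'M[R]_(p, n)) (l : nat) : Prop :=
  \rank (obsmx A C l) = n /\ forall l', (l' < l)%N -> \rank (obsmx A C l') != n.

Definition observable (A : 'M[R]_n) (C : 'M[R]_(p, n)) : Prop :=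
  \rank (obsmx A C n) = n.

Definition toeplmx (A : 'M[R]_n) (B : 'M[R]_(n, m)) (C : 'M[R]_(p, n)) (l : nat)
  : 'M[R]_(l * p, l * m) :=
  blockmx l l (fun i j => if (j < i)%N then C *m A ^+ (i - j - 1) *m B else 0).

Definition reachmx (A : 'M[R]_n) (B : 'M[R]_(n, m)) (l : nat) : 'M[R]_(n, l * m) :=
  blockrow l (fun j => A ^+ (l - 1 - j) *m B).

Definition shiftmx (q l : nat) : 'M[R]_(l * q) :=
  blockmx l l (fun i j => if j == i.+1 then (1%:M : 'M[R]_q) else 0).

Definition Fmx (l : nat) : 'M[R]_(l * p + l * m) :=
  block_mx (shiftmx p l) 0 0 (shiftmx m l).

Definition Lmx (l : nat) : 'M[R]_(l * p + l * m, p) :=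
  col_mx (blockcol l (fun i => if i == l.-1 then (1%:M : 'M[R]_p) else 0)) 0.

Definition Bmx (l : nat) : 'M[R]_(l * p + l * m, m) :=
  col_mx 0 (blockcol l (fun i => if i == l.-1 then (1%:M : 'M[R]_m) else 0)).

Definition Zmx (A : 'M[R]_n) (B : 'M[R]_(n, m)) (C : 'M[R]_(p, n)) (l : nat)
  (OL : 'M[R]_(n, l * p)) : 'M[R]_(p, l * p + l * m) :=
  row_mx (C *m A ^+ l *m OL)
         (C *m reachmx A B l - C *m A ^+ l *m OL *m toeplmx A B C l).

Definition Amx (A : 'M[R]_n) (B : 'M[R]_(n, m)) (C : 'M[R]_(p, n)) (l : nat)
  (OL : 'M[R]_(n, l * p)) : 'M[R]_(l * p + l * m) :=
  Fmx l + Lmx l *m Zmx A B C OL.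

End Defs.

Definition stackv (R : realFieldType) (q l : nat) (w : nat -> 'cV[R]_q) (k0 : nat)
  : 'cV[R]_(l * q) :=
  \col_(i < l * q) mxent (w (k0 + i %/ q)%N) (i %% q)%N 0.

(* Along any trajectory, the window
   [Y; U] = (y(k0), ..., y(k0+l-1), u(k0), ..., u(k0+l-1)) satisfies
   Y = O_l x(k0) + T_l U  and  x(k0+l) = A^l x(k0) + R_l U.  Since O_l^L O_l = I,
   Z_l [Y; U] = C A^l O_l^L (Y - T_l U) + C R_l U = C x(k0+l) = y(k0+l),
   so one step of xi^+ = A_l xi + B_l u shifts the window by one sample; started
   from the initial window, xi therefore always equals the current window.  The
   recursion for chi is a pure shift register fed with y and u, which after l
   steps has flushed chi(0) and holds exactly the last l samples. *)
From HB Require Import structures.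
From mathcomp Require Import all_boot all_order all_algebra zify.
Set Implicit Arguments. Unset Strict Implicit. Unset Printing Implicit Defensive.
Import Order.TTheory GRing.Theory Num.Theory.
Local Open Scope ring_scope.

Section BlockMatrices.
Variable R : realFieldType.

Lemma mxentE a b (M : 'M[R]_(a, b)) (i : 'I_a) (j : 'I_b) : mxent M i j = M i j.
Proof. by rewrite /mxent !valK. Qed.

Lemma mxent_in a b (M : 'M[R]_(a, b)) i j (ia : (i < a)%N) (jb : (j < b)%N) :
  mxent M i j = M (Ordinal ia) (Ordinal jb).
Proof. by rewrite -mxentE. Qed.

Lemma mxent_out a b (M : 'M[R]_(a, b)) i j :
  ~~ ((i < a) && (j < b))%N -> mxent M i j = 0.
Proof.
rewrite negb_and /mxent => /orP[h|h]; first by rewrite insubN.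
by case: (insub i) => // ?; rewrite insubN.
Qed.

Lemma mxent_mul a b c (M : 'M[R]_(a, b)) (N : 'M[R]_(b, c)) i j :
  mxent (M *m N) i j = \sum_(r < b) mxent M i r * mxent N r j.
Proof.
have [/andP[hi hj]|out] := boolP ((i < a) && (j < c))%N.
  rewrite (mxent_in _ hi hj) mxE.
  by apply: eq_bigr => r _; rewrite -!mxentE.
rewrite mxent_out // big1 // => r _; move: out; rewrite negb_and => /orP[h|h].
  by rewrite [mxent M _ _]mxent_out ?mul0r // negb_and h.
by rewrite [mxent N _ _]mxent_out ?mulr0 // negb_and h orbT.
Qed.

Lemma mxentD a b (M N : 'M[R]_(a, b)) i j :
  mxent (M + N) i j = mxent M i j + mxent N i j.
Proof.
have [/andP[hi hj]|out] := boolP ((i < a) && (j < b))%N; last first.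
  by rewrite !mxent_out // addr0.
by rewrite !(mxent_in _ hi hj) mxE.
Qed.

Lemma mxent0 a b i j : mxent (0 : 'M[R]_(a, b)) i j = 0.
Proof.
have [/andP[hi hj]|out] := boolP ((i < a) && (j < b))%N; last by rewrite mxent_out.
by rewrite (mxent_in _ hi hj) mxE.
Qed.

Lemma mxent_sum a b l (F : 'I_l -> 'M[R]_(a, b)) i j :
  mxent (\sum_(k < l) F k) i j = \sum_(k < l) mxent (F k) i j.
Proof. by elim/big_rec2: _ => [|k x y _ <-]; rewrite ?mxent0 ?mxentD. Qed.

Lemma sum_divn_modn l b (f : nat -> nat -> R) :
  \sum_(k < l * b) f (k %/ b)%N (k %% b)%N = \sum_(j < l) \sum_(r < b) f j r.
Proof.
have [->|b_gt0] := posnP b.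
  by rewrite muln0 big_ord0 big1 // => j _; rewrite big_ord0.
elim: l => [|l IHl]; first by rewrite mul0n !big_ord0.
rewrite mulSnr big_split_ord /= IHl big_ord_recr /=; congr (_ + _).
apply: eq_bigr => r _.
by rewrite divnMDl // divn_small // addn0 modnMDl modn_small.
Qed.

Lemma blockcol_mul a b c l (F : nat -> 'M[R]_(a, b)) (M : 'M[R]_(b, c)) :
  blockcol l F *m M = blockcol l (fun i => F i *m M).
Proof.
apply/matrixP => k j; rewrite !mxE mxent_mul.
by apply: eq_bigr => r _; rewrite mxE mxentE.
Qed.

Lemma blockmx_mul_blockcol a b c l1 l2 (F : nat -> nat -> 'M[R]_(a, b))
    (G : nat -> 'M[R]_(b, c)) :
  blockmx l1 l2 F *m blockcol l2 G =
  blockcol l1 (fun i => \sum_(j < l2) F i j *m G j).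
Proof.
apply/matrixP => k j; rewrite !mxE mxent_sum.
under eq_bigr do rewrite !mxE.
rewrite (sum_divn_modn _ _
  (fun s r => mxent (F (k %/ a)%N s) (k %% a)%N r * mxent (G s) r j)).
by apply: eq_bigr => s _; rewrite mxent_mul; apply: eq_bigr => r _; rewrite mxentE.
Qed.

Lemma blockrow_mul_blockcol a b c l (F : nat -> 'M[R]_(a, b))
    (G : nat -> 'M[R]_(b, c)) :
  blockrow l F *m blockcol l G = \sum_(j < l) F j *m G j.
Proof.
apply/matrixP => i j; rewrite !mxE summxE.
under eq_bigr do rewrite !mxE.
rewrite (sum_divn_modn _ _ (fun s r => mxent (F s) i r * mxent (G s) r j)).
by apply: eq_bigr => s _; rewrite mxE; apply: eq_bigr => r _; rewrite !mxentE.
Qed.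

Lemma blockcolD a b l (F G : nat -> 'M[R]_(a, b)) :
  blockcol l F + blockcol l G = blockcol l (fun i => F i + G i).
Proof. by apply/matrixP => k j; rewrite !mxE mxentD. Qed.

Lemma eq_blockcol a b l (F G : nat -> 'M[R]_(a, b)) :
  (forall i, (i < l)%N -> F i = G i) -> blockcol l F = blockcol l G.
Proof.
move=> eqFG; apply/matrixP => k j; rewrite !mxE eqFG //.
have a_gt0 : (0 < a)%N by have := ltn_ord k; nia.
by rewrite ltn_divLR // ltn_ord.
Qed.

Lemma stackv_blockcol q l (w : nat -> 'cV[R]_q) k0 :
  stackv l w k0 = blockcol l (fun i => w (k0 + i)%N).
Proof. by apply/matrixP => k j; rewrite !mxE (ord1 j). Qed.

Definition colblk q l (v : 'cV[R]_(l * q)) (i : nat) : 'cV[R]_q :=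
  \col_(r < q) mxent v (i * q + r)%N 0.

Lemma blockcol_colblk q l (v : 'cV[R]_(l * q)) : blockcol l (colblk v) = v.
Proof.
apply/matrixP => k j; rewrite !mxE (ord1 j).
have q_gt0 : (0 < q)%N by have := ltn_ord k; nia.
rewrite (mxent_in _ (ltn_pmod k q_gt0) (ltn0Sn 0)) mxE /= -divn_eq.
by rewrite (mxent_in _ (ltn_ord k) (ltn0Sn 0)); congr (v _ _); apply: val_inj.
Qed.

Lemma colblk_blockcol q l (F : nat -> 'cV[R]_q) i :
  (i < l)%N -> colblk (blockcol l F) i = F i.
Proof.
move=> il; apply/matrixP => r j; rewrite !mxE (ord1 j).
have ir_lt : (i * q + r < l * q)%N by have := ltn_ord r; nia.
have q_gt0 : (0 < q)%N := leq_ltn_trans (leq0n r) (ltn_ord r).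
rewrite (mxent_in _ ir_lt (ltn0Sn 0)) mxE /=.
rewrite divnMDl // divn_small // addn0 modnMDl modn_small //.
by rewrite (mxent_in _ (ltn_ord r) (ltn0Sn 0)); congr (F i _ _); apply: val_inj.
Qed.

End BlockMatrices.

Section ShiftRegister.
Variables (R : realFieldType) (q l : nat).

Definition last_blockmx : 'M[R]_(l * q, q) :=
  blockcol l (fun i => if i == l.-1 then (1%:M : 'M[R]_q) else 0).

Lemma shiftmx_step (v : 'cV[R]_(l * q)) (a : 'cV[R]_q) :
  shiftmx R q l *m v + last_blockmx *m a =
  blockcol l (fun i => (if (i.+1 < l)%N then colblk v i.+1 else 0) +
                       (if i == l.-1 then a else 0)).
Proof.
rewrite -[v in _ *m v]blockcol_colblk /shiftmx blockmx_mul_blockcol.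
rewrite /last_blockmx blockcol_mul blockcolD; apply: eq_blockcol => i il.
congr (_ + _); last by case: eqP => _; rewrite ?mul1mx ?mul0mx.
case: ifP => [i1l|i1l].
  rewrite (bigD1 (Ordinal i1l)) //= eqxx mul1mx big1 ?addr0 // => j ji1.
  by rewrite ifN ?mul0mx //; apply: contra ji1 => /eqP ji; apply/eqP/val_inj.
rewrite big1 // => j _; rewrite ifN ?mul0mx //.
by apply: contraFN i1l => /eqP <-.
Qed.

Lemma shiftmx_stackv (w : nat -> 'cV[R]_q) k0 :
  shiftmx R q l *m stackv l w k0 + last_blockmx *m w (k0 + l)%N =
  stackv l w k0.+1.
Proof.
rewrite shiftmx_step !stackv_blockcol; apply: eq_blockcol => i il.
case: ifP => [i1l|/negbT]; last rewrite -leqNgt => i1l.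
  by rewrite colblk_blockcol // ifN ?addr0; [congr w; lia | apply/eqP; lia].
have -> : i = l.-1 by lia.
by rewrite eqxx add0r; congr w; lia.
Qed.

Lemma shift_register_window (s : nat -> 'cV[R]_(l * q)) (w : nat -> 'cV[R]_q) :
  (forall k, s k.+1 = shiftmx R q l *m s k + last_blockmx *m w k) ->
  forall k, (l <= k)%N -> s k = stackv l w (k - l).
Proof.
move=> s_step.
(* Block i of s k was fed at time k + i - l, whatever s 0 was. *)
have blkE k i : (i < l)%N -> (l <= k + i)%N -> colblk (s k) i = w (k + i - l)%N.
  elim: k i => [|k IHk] i il lki; first by lia.
  rewrite s_step shiftmx_step colblk_blockcol //.
  case: ifP => [i1l|/negbT]; last rewrite -leqNgt => i1l.
    by rewrite ifN ?addr0 ?IHk ?addSnnS //; apply/eqP; lia.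
  have -> : i = l.-1 by lia.
  by rewrite eqxx add0r; congr w; lia.
move=> k lk; rewrite -[s k]blockcol_colblk stackv_blockcol.
by apply: eq_blockcol => i il; rewrite blkE; [congr w; lia | | lia].
Qed.

End ShiftRegister.

Section Trajectory.
Variables (R : realFieldType) (n m p : nat).
Variables (A : 'M[R]_n) (B : 'M[R]_(n, m)) (C : 'M[R]_(p, n)).
Variables (u : nat -> 'cV[R]_m) (x : nat -> 'cV[R]_n).
Hypothesis x_step : forall k, x k.+1 = A *m x k + B *m u k.

Definition io_window l k0 : 'cV[R]_(l * p + l * m) :=
  col_mx (stackv l (fun j => C *m x j) k0) (stackv l u k0).

Lemma trajectoryD k0 i :
  x (k0 + i)%N = A ^+ i *m x k0 + \sum_(j < i) A ^+ (i - j - 1) *m B *m u (k0 + j)%N.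
Proof.
elim: i => [|i IHi]; first by rewrite addn0 big_ord0 mul1mx addr0.
rewrite addnS x_step IHi big_ord_recr /= exprS -mulmxE mulmxDr mulmxA -addrA.
rewrite subSnn subnn expr0 mul1mx mulmx_sumr; congr (_ + (_ + _)).
apply: eq_bigr => j _; rewrite !mulmxA mulmxE -exprS.
by congr (_ ^+ _ *m _ *m _); have := ltn_ord j; lia.
Qed.

Lemma output_stackv l k0 :
  stackv l (fun j => C *m x j) k0 =
  obsmx A C l *m x k0 + toeplmx A B C l *m stackv l u k0.
Proof.
rewrite /obsmx /toeplmx !stackv_blockcol blockcol_mul blockmx_mul_blockcol blockcolD.
apply: eq_blockcol => i il /=.
rewrite trajectoryD mulmxDr mulmxA mulmx_sumr; congr (_ + _).
rewrite (bigID (fun j : 'I_l => (j < i)%N)) /= [X in _ + X]big1 => [|j /negbTE ->];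
  last by rewrite mul0mx.
rewrite addr0 (big_ord_narrow (ltnW il)) /=.
by apply: eq_bigr => j _; rewrite (ltn_ord j) !mulmxA.
Qed.

Lemma state_after_window l k0 :
  x (k0 + l)%N = A ^+ l *m x k0 + reachmx A B l *m stackv l u k0.
Proof.
rewrite stackv_blockcol /reachmx blockrow_mul_blockcol trajectoryD; congr (_ + _).
by apply: eq_bigr => j _; rewrite subnAC.
Qed.

Variables (l : nat) (OL : 'M[R]_(n, l * p)).
Hypothesis OL_left_inverse : OL *m obsmx A C l = 1%:M.

Lemma Zmx_window k0 : Zmx A B C OL *m io_window l k0 = C *m x (k0 + l)%N.
Proof.
have OL_obs : C *m A ^+ l *m OL *m obsmx A C l = C *m A ^+ l.
  by rewrite -mulmxA OL_left_inverse mulmx1.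
rewrite /Zmx mul_row_col output_stackv state_after_window.
rewrite mulmxDr mulmxBl !mulmxDr mulmxA OL_obs !mulmxA.
by rewrite addrCA -addrA addrCA subrr addr0 addrC.
Qed.

Lemma observer_step (t : 'cV[R]_(l * p)) (b : 'cV[R]_(l * m)) y v :
  @Fmx R m p l *m col_mx t b + @Lmx R m p l *m y + @Bmx R m p l *m v =
  col_mx (shiftmx R p l *m t + last_blockmx R p l *m y)
         (shiftmx R m l *m b + last_blockmx R m l *m v).
Proof.
rewrite /Fmx /Lmx /Bmx mul_block_col !mul_col_mx !mul0mx !add_col_mx.
by rewrite !addr0 add0r.
Qed.

Lemma Amx_window k0 :
  Amx A B C OL *m io_window l k0 + @Bmx R m p l *m u (k0 + l)%N =
  io_window l k0.+1.
Proof.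
rewrite /Amx mulmxDl -mulmxA Zmx_window observer_step.
by rewrite !shiftmx_stackv.
Qed.

Lemma predictor_window (xi : nat -> 'cV[R]_(l * p + l * m)) :
  xi l = io_window l 0 ->
  (forall k, (l <= k)%N -> xi k.+1 = Amx A B C OL *m xi k + @Bmx R m p l *m u k) ->
  forall k, (l <= k)%N -> xi k = io_window l (k - l).
Proof.
move=> xi_l xi_step k /subnKC <-; rewrite addKn.
elim: (k - l)%N => [|d IHd]; first by rewrite addn0.
by rewrite addnS xi_step ?leq_addr // IHd (addnC l d) Amx_window.
Qed.

Lemma observer_window (chi : nat -> 'cV[R]_(l * p + l * m)) :
  (forall k, chi k.+1 = @Fmx R m p l *m chi k + @Lmx R m p l *m (C *m x k)
                        + @Bmx R m p l *m u k) ->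
  forall k, (l <= k)%N -> chi k = io_window l (k - l).
Proof.
move=> chi_step k lk; rewrite -[chi k]vsubmxK.
have chi_stepE j : chi j.+1 =
    col_mx (shiftmx R p l *m usubmx (chi j) + last_blockmx R p l *m (C *m x j))
           (shiftmx R m l *m dsubmx (chi j) + last_blockmx R m l *m u j).
  by rewrite chi_step -{1}[chi j]vsubmxK observer_step.
congr col_mx.
  apply: (@shift_register_window _ _ _ (fun j => usubmx (chi j))) => // j.
  by rewrite chi_stepE col_mxKu.
apply: (@shift_register_window _ _ _ (fun j => dsubmx (chi j))) => // j.
by rewrite chi_stepE col_mxKd.
Qed.

End Trajectory.

Theorem lemma7 (R : realFieldType) (n m p : nat)
  (A : 'M[R]_n) (B : 'M[R]_(n, m)) (C : 'M[R]_(p, n)) (l : nat)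
  (OL : 'M[R]_(n, l * p)) :
  observable A C ->
  is_obs_index A C l ->
  OL *m obsmx A C l = 1%:M ->
  forall (xh : 'cV[R]_n) (chih : 'cV[R]_(l * p + l * m)) (u : nat -> 'cV[R]_m),
  exists xih : 'cV[R]_(l * p + l * m),
  forall (x : nat -> 'cV[R]_n) (chi xi : nat -> 'cV[R]_(l * p + l * m)),
    x 0%N = xh ->
    (forall k, x k.+1 = A *m x k + B *m u k) ->
    chi 0%N = chih ->
    (forall k, chi k.+1 = @Fmx R m p l *m chi k + @Lmx R m p l *m (C *m x k) + @Bmx R m p l *m u k) ->
    xi l = xih ->
    (forall k, (l <= k)%N -> xi k.+1 = Amx A B C OL *m xi k + @Bmx R m p l *m u k) ->
    forall k, (l <= k)%N ->
      let z := col_mx (stackv l (fun j => C *m x j) (k - l))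
                      (stackv l u (k - l)) in
      xi k = z /\ chi k = z.
Proof.
move=> _ _ OL_inv xh chih u.
pose xt := fix xt k := if k is k'.+1 then A *m xt k' + B *m u k' else xh.
exists (io_window C u xt l 0) => x chi xi x0 x_step _ chi_step xi_l xi_step k lk.
have x_xt : x =1 xt by elim=> [|j IHj] //=; rewrite x_step IHj.
have xi_l' : xi l = io_window C u x l 0.
  by rewrite xi_l /io_window; congr col_mx; apply/matrixP => i j; rewrite !mxE x_xt.
split; first exact: (predictor_window x_step OL_inv xi_l' xi_step).
exact: (observer_window chi_step).
Qed.
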